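(* Let $G,G'$ be locally compact Hausdorff groupoids, $G$ metrizable with metric $d_{G}$ for which inversion is an isometry and $r,s$ are contractions, and let $\pi:G\to G'$ be a continuous, proper groupoid morphism such that for every unit $u\in G^0$, $\pi|_{G^{u}}:G^{u}\to (G')^{\pi(u)}$ is a homeomorphism. Suppose a sequence $x_{k}'$ converges to $x'$ in $G'$. Then $\lim_{k}\mathrm{diam}_{G}(\pi^{-1}\{x_{k}'\})=0$ if and only if $\lim_{k}\mathrm{diam}_{G}(\pi^{-1}\{r(x_{k}')\})=0$.
   Context: $G^{u}=r^{-1}\{u\}$. For a compact $E\subseteq G$, $\mathrm{diam}_{G}(E)=\sup\{d_G(x,y):x,y\in E\}$. *)

From HB Require Import structures.
From mathcomp Require Import all_boot all_order all_algebra.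
From mathcomp Require Import all_classical all_reals topology normedtype.
Set Implicit Arguments. Unset Strict Implicit. Unset Printing Implicit Defensive.
Import Order.TTheory GRing.Theory Num.Theory.
Import numFieldNormedType.Exports.
Local Open Scope classical_set_scope.
Local Open Scope ring_scope.

(* Groupoid data on a carrier T: unit space G^0, range r, source s,
   (total function for the partial) multiplication mul, inverse inv. *)
Record groupoid_data (T : Type) := GroupoidData {
  gunits : set T;
  gr : T -> T;
  gs : T -> T;
  gmul : T -> T -> T;
  ginv : T -> T }.

(* Groupoid axioms; the product x*y is defined iff gs x = gr y. *)
Definition is_groupoid (T : Type) (G : groupoid_data T) : Prop :=
  [/\ (forall x, gunits G (gr G x) /\ gunits G (gs G x)) /\
        (forall u, gunits G u -> gr G u = u /\ gs G u = u),
      (forall x y, gs G x = gr G y ->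
          gr G (gmul G x y) = gr G x /\ gs G (gmul G x y) = gs G y),
      (forall x y z, gs G x = gr G y -> gs G y = gr G z ->
          gmul G (gmul G x y) z = gmul G x (gmul G y z)),
      (forall x, gmul G (gr G x) x = x /\ gmul G x (gs G x) = x) &
      (forall x, [/\ gr G (ginv G x) = gs G x, gs G (ginv G x) = gr G x,
                     gmul G x (ginv G x) = gr G x &
                     gmul G (ginv G x) x = gs G x])].

Definition is_lch_groupoid (T : topologicalType) (G : groupoid_data T) : Prop :=
  [/\ is_groupoid G,
      hausdorff_space T,
      (forall x : T, exists K : set T, compact K /\ nbhs x K),
      {within [set p : T * T | gs G p.1 = gr G p.2],
         continuous (fun p : T * T => gmul G p.1 p.2)} &
      continuous (ginv G)].

Definition range_fiber (T : Type) (G : groupoid_data T) (u : T) : set T :=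
  [set x | gr G x = u].

Definition compatible_metric (R : realType) (T : topologicalType)
    (d : T -> T -> R) : Prop :=
  [/\ (forall x y, 0 <= d x y),
      (forall x y, d x y = 0 <-> x = y),
      (forall x y, d x y = d y x),
      (forall x y z, d x z <= d x y + d y z) &
      (forall (x : T) (A : set T),
          nbhs x A <-> exists2 e : R, 0 < e & [set y | d x y < e] `<=` A)].

(* diam_G(E) = sup { d(x,y) : x, y in E }  (mathcomp's sup; 0 for E empty) *)
Definition diam (R : realType) (T : Type) (d : T -> T -> R) (E : set T) : R :=
  sup [set d x y | x in E & y in E].

Definition groupoid_morphism (T T' : Type) (G : groupoid_data T)
    (G' : groupoid_data T') (pi : T -> T') : Prop :=
  forall x y, gs G x = gr G y ->
    gs G' (pi x) = gr G' (pi y) /\ pi (gmul G x y) = gmul G' (pi x) (pi y).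

Definition proper_map (T T' : topologicalType) (pi : T -> T') : Prop :=
  forall K : set T', compact K -> compact (pi @^-1` K).

Definition fiber_homeomorphism (T T' : topologicalType) (G : groupoid_data T)
    (G' : groupoid_data T') (pi : T -> T') (u : T) : Prop :=
  [/\ (forall x, range_fiber G u x -> range_fiber G' (pi u) (pi x)),
      {within range_fiber G u, continuous pi} &
      exists g : T' -> T,
        [/\ (forall y, range_fiber G' (pi u) y ->
                range_fiber G u (g y) /\ pi (g y) = y),
            (forall x, range_fiber G u x -> g (pi x) = x) &
            {within range_fiber G' (pi u), continuous g}]].

From HB Require Import structures.
From mathcomp Require Import all_boot all_order all_algebra.
From mathcomp Require Import all_classical all_reals topology normedtype.
From mathcomp Require Import lra.
Set Implicit Arguments. Unset Strict Implicit. Unset Printing Implicit Defensive.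
Import Order.TTheory GRing.Theory Num.Theory.
Import numFieldNormedType.Exports.
Local Open Scope classical_set_scope.
Local Open Scope ring_scope.

(* Since r is a contraction mapping pi^-1{x'} onto pi^-1{r x'}, the diameters
   of the fibres dominate those of the unit fibres.  Conversely, pi is
   injective on each G^u, so y |-> (pi y, r y) is injective; by properness of
   pi this injectivity is uniform over pi^-1 K' for a compact neighbourhood K'
   of x': two points of the same fibre above K' whose ranges are close are
   themselves close.  Hence small unit fibres force small fibres near x'. *)

Section Diameter.
Variables (R : realType) (T : Type) (d : T -> T -> R).
Hypothesis d_ge0 : forall x y, 0 <= d x y.

Lemma le_diam (A : set T) x y :
  has_ubound [set d a b | a in A & b in A] -> A x -> A y -> d x y <= diam d A.
Proof. by move=> ubA Ax Ay; apply: ub_le_sup => //; exists x => //; exists y. Qed.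

Lemma diam_ge0 (A : set T) : 0 <= diam d A.
Proof.
have [[[_ [x Ax [y Ay _]]] ubA]|nosup] :=
  pselect (has_sup [set d x y | x in A & y in A]).
  by apply: le_trans (d_ge0 x y) _; exact: le_diam.
by rewrite /diam sup_out.
Qed.

Lemma diam_le (A : set T) c :
  0 <= c -> (forall x y, A x -> A y -> d x y <= c) -> diam d A <= c.
Proof.
move=> c_ge0 le_c; rewrite /diam.
have [nzA|zA] := pselect ([set d x y | x in A & y in A] !=set0).
  by apply: ge_sup => // _ [x Ax [y Ay <-]]; exact: le_c.
by rewrite sup_out // => -[].
Qed.

Lemma diam_le_contraction (f : T -> T) (A B : set T) :
  (forall x y, d (f x) (f y) <= d x y) ->
  has_ubound [set d a b | a in A & b in A] -> B `<=` f @` A ->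
  diam d B <= diam d A.
Proof.
move=> f_contr ubA BfA; apply: diam_le; first exact: diam_ge0.
move=> _ _ /BfA [x Ax <-] /BfA [y Ay <-].
by apply: le_trans (f_contr x y) _; exact: le_diam.
Qed.

End Diameter.

Lemma compact_shrinking_cluster (R : realType) (T : topologicalType)
    (A : set T) (S : R -> set T) :
  compact A -> (forall e, 0 < e -> S e `<=` A) ->
  (forall e, 0 < e -> S e !=set0) ->
  (forall e1 e2, 0 < e1 -> e1 <= e2 -> S e1 `<=` S e2) ->
  exists2 p, A p & forall e B, 0 < e -> nbhs p B -> S e `&` B !=set0.
Proof.
move=> cA SA S_neq0 S_homo.
pose F := filter_from [set e | 0 < e] S.
have FF : ProperFilter F.
  apply: filter_from_proper => //; apply: filter_from_filter.
    by exists 1; exact: ltr01.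
  move=> i j i0 j0; exists (Num.min i j); first by rewrite /= lt_min i0.
  by move=> x Sx; split; apply: S_homo x Sx; rewrite ?lt_min ?i0 ?ge_min ?lexx ?orbT.
have [p [Ap clp]] := cA F FF (ex_intro2 _ _ 1 ltr01 (SA 1 ltr01)).
by exists p => // e B e0; apply: clp; exists e.
Qed.

Section CompatibleMetric.
Variables (R : realType) (T : topologicalType) (d : T -> T -> R).
Hypothesis dm : compatible_metric d.

Lemma nbhs_dball x e : 0 < e -> nbhs x [set y | d x y < e].
Proof. by case: dm => _ _ _ _ nbhsE e0; apply/nbhsE; exists e. Qed.

Lemma dist_le3 x y z w : d x w <= d x y + d y z + d z w.
Proof.
case: dm => _ _ _ dtri _; apply: le_trans (dtri x z w) _.
by rewrite lerD2r; exact: dtri.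
Qed.

Lemma compact_dist_bounded (A : set T) :
  compact A -> has_ubound [set d x y | x in A & y in A].
Proof.
case: dm => d_ge0 _ dC dtri _ cA.
have [[x0 Ax0]|A0] := pselect (A !=set0); last first.
  by exists 0 => z [x Ax _]; case: A0; exists x.
suff [M le_M] : exists M, forall y, A y -> d x0 y <= M.
  exists (M + M) => _ [x Ax [y Ay <-]].
  by apply: le_trans (dtri x x0 y) _; rewrite dC lerD ?le_M.
apply: contrapT => unbounded.
pose S e := [set y | A y /\ e^-1 < d x0 y].
have [p _ clp] : exists2 p, A p & forall e B, 0 < e -> nbhs p B -> S e `&` B !=set0.
  apply: compact_shrinking_cluster => //; first by move=> e _ y [].
    move=> e _; apply: contrapT => S0; apply: unbounded; exists e^-1 => y Ay.
    by rewrite leNgt; apply/negP => lt_y; apply: S0; exists y.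
  move=> e1 e2 e1_gt0 le_e y [Ay lt_y]; split => //.
  by apply: le_lt_trans lt_y; rewrite lef_pV2 ?posrE // (lt_le_trans e1_gt0).
have dp_gt0 : 0 < (d x0 p + 1)^-1 by rewrite invr_gt0 ltr_wpDl ?d_ge0.
have [y [[_ far_y] near_y]] := clp _ _ dp_gt0 (nbhs_dball p ltr01).
rewrite invrK in far_y; have := dtri x0 p y; rewrite /= in near_y; lra.
Qed.

End CompatibleMetric.

Section UniformInjectivity.
Variables (R : realType) (T T' : topologicalType) (d : T -> T -> R).
Variables (f : T -> T) (pi : T -> T').
Hypotheses (dm : compatible_metric d) (f_contr : forall x y, d (f x) (f y) <= d x y).
Hypotheses (pi_cont : continuous pi) (pi_proper : proper_map pi).
Hypotheses (hT' : hausdorff_space T').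
Hypothesis f_pi_inj : forall y z, f y = f z -> pi y = pi z -> y = z.

Lemma uniform_injectivity (K' : set T') e : compact K' -> 0 < e ->
  exists2 del, 0 < del & forall y z, pi y = pi z -> K' (pi y) ->
    d (f y) (f z) < del -> d y z < e.
Proof.
case: (dm) => d_ge0 dE dC _ _ cK' e_gt0; apply: contrapT => no_del.
pose S del := [set p : T * T | [/\ pi p.1 = pi p.2, K' (pi p.1),
  d (f p.1) (f p.2) < del & e <= d p.1 p.2]].
have [[y z] _ clyz] : exists2 p, (pi @^-1` K' `*` pi @^-1` K') p &
    forall del B, 0 < del -> nbhs p B -> S del `&` B !=set0.
  apply: compact_shrinking_cluster.
  - by apply: compact_setX; exact: pi_proper.
  - by move=> del _ [a b] [/= <- Ka _ _].
  - move=> del del_gt0; apply: contrapT => S0; apply: no_del; exists del => // a b.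
    move=> piab Ka fab; rewrite ltNge; apply/negP => eab; apply: S0.
    by exists (a, b).
  - by move=> del1 del2 _ le_del [a b] [? ? lt_del ?]; split => //; exact: lt_le_trans le_del.
have near_yz del eta : 0 < del -> 0 < eta ->
    exists a b, [/\ S del (a, b), d y a < eta & d z b < eta].
  move=> del_gt0 eta_gt0.
  have nbhs_yz : nbhs (y, z) ([set a | d y a < eta] `*` [set b | d z b < eta]).
    exists ([set a | d y a < eta], [set b | d z b < eta]) => //.
    by split; apply: nbhs_dball.
  by have [[a b] [Sab [/= ya zb]]] := clyz _ _ del_gt0 nbhs_yz; exists a, b.
have fyz : f y = f z.
  apply/dE/eqP; rewrite eq_le d_ge0 andbT; apply/ler_addgt0Pr => eps eps_gt0.
  have eps3_gt0 : 0 < eps / 3 by rewrite divr_gt0.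
  have [a [b [[_ _ fab _] ya zb]]] := near_yz _ _ eps3_gt0 eps3_gt0.
  have := dist_le3 dm (f y) (f a) (f b) (f z).
  have := f_contr y a; have := f_contr b z; rewrite (dC b z); lra.
have piyz : pi y = pi z.
  apply: hT' => A B /pi_cont nA /pi_cont nB.
  have nAB : nbhs (y, z) (pi @^-1` A `*` pi @^-1` B) by exists (pi @^-1` A, pi @^-1` B).
  have [[a b] [[piab _ _ _] [/= Aa Bb]]] := clyz 1 _ ltr01 nAB.
  by exists (pi a); split => //; rewrite piab.
have : e <= d y z.
  apply/ler_addgt0Pr => eps eps_gt0.
  have eps2_gt0 : 0 < eps / 2 by rewrite divr_gt0.
  have [a [b [[_ _ _ eab] ya zb]]] := near_yz _ _ ltr01 eps2_gt0.
  have := dist_le3 dm a y z b; rewrite (dC a y); lra.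
by rewrite (f_pi_inj fyz piyz) (proj2 (dE z z) erefl) leNgt e_gt0.
Qed.

End UniformInjectivity.

Lemma morphism_gr (T T' : Type) (G : groupoid_data T) (G' : groupoid_data T')
    (pi : T -> T') :
  is_groupoid G -> is_groupoid G' -> groupoid_morphism G G' pi ->
  forall y, pi (gr G y) = gr G' (pi y).
Proof.
move=> [[units_rs units_id] _ _ mul_unit _] [_ _ assoc' mul_unit' inv'] mpi y.
have [_ s_ry] := units_id _ (units_rs y).1.
have [composable pi_mul] := mpi (gr G y) y s_ry.
rewrite (mul_unit y).1 in pi_mul.
have [_ _ mul_inv _] := inv' (pi y).
(* pi (r y) = pi (r y) * (pi y * (pi y)^-1) = (pi (r y) * pi y) * (pi y)^-1 = pi y * (pi y)^-1 *)
rewrite -(mul_unit' (pi (gr G y))).2 composable -mul_inv -assoc' //.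
  by rewrite -pi_mul.
by have [-> _ _ _] := inv' (pi y).
Qed.

Section FiberHomeomorphism.
Variables (T T' : topologicalType) (G : groupoid_data T) (G' : groupoid_data T').
Variable pi : T -> T'.
Hypotheses (gG : is_groupoid G) (gG' : is_groupoid G').
Hypothesis mpi : groupoid_morphism G G' pi.
Hypothesis fh : forall u, gunits G u -> fiber_homeomorphism G G' pi u.

Lemma fiber_homeo_inj y z : gr G y = gr G z -> pi y = pi z -> y = z.
Proof.
case: gG => [[units_rs _] _ _ _ _] ryz piyz.
have [_ _ [g [_ gK _]]] := fh (units_rs y).1.
by rewrite -(gK y erefl) piyz gK.
Qed.

Lemma fiber_homeo_lift u y' :
  gunits G u -> gr G' y' = pi u -> exists2 y, gr G y = u & pi y = y'.
Proof.
move=> Gu ry'; have [_ _ [g [g_fiber _ _]]] := fh Gu.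
by have [? ?] := g_fiber y' ry'; exists (g y').
Qed.

Lemma unit_of_unit_image z : gunits G' (pi z) -> gr G z = z.
Proof.
case: (gG) => [[units_rs units_id] _ _ _ _]; case: gG' => [[_ units_id'] _ _ _ _].
move=> G'piz; apply: fiber_homeo_inj.
  by have [-> _] := units_id _ (units_rs z).1.
by rewrite (morphism_gr gG gG' mpi) (units_id' _ G'piz).1.
Qed.

Lemma unit_fiber_image x' :
  pi @^-1` [set gr G' x'] `<=` gr G @` (pi @^-1` [set x']).
Proof.
case: (gG) => [[units_rs _] _ _ _ _]; case: gG' => [[units_rs' _] _ _ _ _].
move=> u /= piu; have ru : gr G u = u.
  by apply: unit_of_unit_image; rewrite piu; exact: (units_rs' x').1.
have Gu : gunits G u by rewrite -ru; exact: (units_rs u).1.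
by have [y ry piy] := fiber_homeo_lift Gu (esym piu); exists y.
Qed.

End FiberHomeomorphism.

Theorem lemma7p30 (R : realType) (T T' : topologicalType)
    (G : groupoid_data T) (G' : groupoid_data T') (d : T -> T -> R)
    (pi : T -> T') (xk : nat -> T') (x' : T') :
  is_lch_groupoid G -> is_lch_groupoid G' ->
  compatible_metric d ->
  (forall x y, d (ginv G x) (ginv G y) = d x y) ->
  (forall x y, d (gr G x) (gr G y) <= d x y) ->
  (forall x y, d (gs G x) (gs G y) <= d x y) ->
  continuous pi -> proper_map pi -> groupoid_morphism G G' pi ->
  (forall u, gunits G u -> fiber_homeomorphism G G' pi u) ->
  xk @ \oo --> x' ->
  ((fun k => diam d (pi @^-1` [set xk k])) @ \oo --> (0 : R)) <->
  ((fun k => diam d (pi @^-1` [set gr G' (xk k)])) @ \oo --> (0 : R)).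
Proof.
move=> [gG _ _ _ _] [gG' hT' lcT' _ _] dm _ r_contr _ pi_cont pi_proper mpi fh xk_cvg.
have d_ge0 : forall x y, 0 <= d x y by case: dm.
have fiber_bounded y' : has_ubound [set d a b | a in pi @^-1` [set y'] & b in pi @^-1` [set y']].
  by apply: compact_dist_bounded => //; apply/pi_proper/compact_set1.
split => [fiber0 | /cvgr0Pnorm_lt unit_fiber0].
  apply: (squeeze_cvgr _ (cvg_cst 0) fiber0); apply: nearW => k.
  rewrite diam_ge0 //=; apply: (diam_le_contraction d_ge0 r_contr (fiber_bounded _)).
  exact: unit_fiber_image gG gG' mpi fh (xk k).
apply/cvgr0Pnorm_le => e e_gt0.
have [K' [cK' K'x']] := lcT' x'.
have [del del_gt0 close] := uniform_injectivity dm r_contr pi_cont pi_proper hT'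
  (fiber_homeo_inj gG fh) cK' e_gt0.
near=> k.
rewrite ger0_norm ?diam_ge0 //; apply: diam_le => [|y z /= yk zk]; first exact: ltW.
apply/ltW/close; first by rewrite yk zk.
  by rewrite yk; near: k; exact: xk_cvg.
have : diam d (pi @^-1` [set gr G' (xk k)]) < del.
  near: k; apply: filterS (unit_fiber0 _ del_gt0) => k.
  by rewrite ger0_norm ?diam_ge0.
by apply: le_lt_trans; apply: le_diam; rewrite //= (morphism_gr gG gG' mpi) ?yk ?zk.
Unshelve. all: by end_near.
Qed.
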